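(* Fix integers $k,r\ge 1$ and $n\ge 0$. Let $R_{k,r}(n)=\frac{r}{kn+r}\binom{kn+r}{n}$. Then $R_{k,r}(n)$ equals the number of ordered $r$-tuples $(T_1,\dots,T_r)$ for which there is a sequence of nonnegative integers $(i_1,\dots,i_r)$ with $i_1+\dots+i_r=n$ such that $T_j\in\mathrm{SVT}(i_j^2,\rho^{(i_j)})$ for each $j$, where $\rho^{(i)}$ is the density on the two-row shape $i^2=(i,i)$ with $\rho_{1,c}=1$ and $\rho_{2,c}=k-1$ for all columns $c$ (for $i_j=0$, $T_j$ is the unique empty tableau).
   Context: For $i\ge 0$, $i^2$ denotes the two-row rectangular shape $(i,i)$. A density on a shape $\lambda$ is an assignment of a nonnegative integer $\rho_{i,j}$ to every cell $(i,j)$ (row $i$, column $j$); let $N=\sum\rho_{i,j}$. A standard set-valued Young tableau of shape $\lambda$ and density $\rho$ assigns to each cell $(i,j)$ a set $S_{i,j}$ with $|S_{i,j}|=\rho_{i,j}$, the sets partitioning $[N]$, such that every element of $S_{i,j}$ is smaller than every element of $S_{i,j+1}$ and of $S_{i+1,j}$ whenever those cells exist (conditions involving an empty set are vacuous). $\mathrm{SVT}(\lambda,\rho)$ is the set of these tableaux. *)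

From HB Require Import structures.
From mathcomp Require Import all_boot all_order all_algebra.
Set Implicit Arguments. Unset Strict Implicit. Unset Printing Implicit Defensive.

(* Cells of the two-row shape (i,i): (row, column) with row : 'I_2 (0 = first
   row, 1 = second row) and column : 'I_i.
   The density rho^(i): first-row cells have density 1, second-row cells k-1,
   so N = i * k.  The ground set [N] is represented by 'I_(i*k)
   (order-preserving shift 1..N -> 0..N-1).
   A set-valued tableau is a partition of [N] into the sets S_cell; it is the
   same as the function  f : [N] -> cells  sending x to the cell whose set
   contains x, with S_cell = f^{-1}(cell). *)

Definition cell (i : nat) : finType := ('I_2 * 'I_i)%type.

Definition density (k : nat) (i : nat) (c : cell i) : nat :=
  if val c.1 == 0 then 1 else k - 1.

Definition next_cell (i : nat) (c d : cell i) : bool :=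
  ((c.1 == d.1) && (val d.2 == (val c.2).+1)) ||
  ((c.2 == d.2) && (val c.1 == 0) && (val d.1 == 1)).

Definition is_svt (k i : nat) (f : {ffun 'I_(i * k) -> cell i}) : bool :=
  [forall c : cell i, #|[set x | f x == c]| == density k c] &&
  [forall x : 'I_(i * k), forall y : 'I_(i * k),
      next_cell (f x) (f y) ==> (val x < val y)].

Definition SVT (k i : nat) : finType :=
  {f : {ffun 'I_(i * k) -> cell i} | @is_svt k i f}.

(* Ordered r-tuples (T_1,...,T_r) with T_j in SVT(i_j^2, rho^(i_j)) and
   i_1 + ... + i_r = n.  Each i_j <= n, so i_j ranges over 'I_n.+1. *)
Definition svt_tuples (k r n : nat) : {set {ffun 'I_r -> {i : 'I_n.+1 & SVT k i}}} :=
  [set t : {ffun 'I_r -> {i : 'I_n.+1 & SVT k i}} | (\sum_(j < r) val (tag (t j)) == n)%N].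

From HB Require Import structures.
From mathcomp Require Import all_boot all_order all_algebra.
From mathcomp Require Import zify.
Import GRing.Theory Num.Theory.
Set Implicit Arguments. Unset Strict Implicit. Unset Printing Implicit Defensive.

(* Reading the entries 1..ik of a tableau in SVT(i^2, rho^(i)) in increasing order
   and writing an up step for a first-row entry and a down step for a second-row
   entry is a bijection onto the words with i up steps and (k-1)i down steps in
   which no prefix has more than k-1 down steps per up step: the column of every
   entry is recovered from the number of entries of its row that precede it, and
   the column condition is exactly the prefix condition.  These ballot words are
   counted by the Raney number R_{k,1}(i).  Counting r-tuples of total size n is
   then the coefficient of x^n in the r-th power of the generating series of the
   R_{k,1}(i), which is R_{k,r}(n) by Raney's convolution identity. *)

Section RaneyNumbers.
Variable mu : nat.

(* [raney n r] is the Raney number R_{mu+1,r}(n) = r/((mu+1)n+r) * C((mu+1)n+r, n),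
   with R_{k,0}(n) = [n == 0]; it is computed by R_{k,r+1}(n+1) = R_{k,r}(n+1) + R_{k,r+k}(n). *)
Fixpoint raney (n : nat) : nat -> nat :=
  match n with
  | 0 => fun _ => 1
  | n'.+1 => fix raney_n r :=
      if r is r'.+1 then raney_n r' + raney n' (r'.+1 + mu) else 0
  end.

Lemma raney0 r : raney 0 r = 1. Proof. by []. Qed.
Lemma raneyS0 n : raney n.+1 0 = 0. Proof. by []. Qed.
Lemma raneySS n r : raney n.+1 r.+1 = raney n.+1 r + raney n (r.+1 + mu).
Proof. by []. Qed.

(* With m = n+1, the inductive step comes down to
   (r+1)(mu m + r + 2) + m (r + mu + 2) = (r+2)((mu+1) m + r + 1). *)
Lemma raney_factorial n r :
  raney n r.+1 * (n`! * (mu * n + r.+1)`!) = r.+1 * (mu.+1 * n + r)`!.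
Proof.
elim: n r => [|n IHn] r; first by rewrite raney0 fact0 !muln0 !add0n !mul1n factS.
elim: r => [|r IHr].
  have := IHn mu; rewrite raneySS raneyS0 add0n mul1n add1n.
  have -> : mu * n.+1 + 1 = (mu * n + mu).+1 by rewrite mulnS; lia.
  have -> : mu.+1 * n.+1 + 0 = (mu.+1 * n + mu).+1 by rewrite mulnS; lia.
  rewrite -addnS !factS.
  move: (raney n mu.+1) n`! (mu * n + mu)`! (mu.+1 * n + mu)`! => a b c d; nia.
have := IHn (r.+1 + mu); rewrite raneySS.
have -> : mu * n + (r.+1 + mu).+1 = (mu * n.+1 + r.+1).+1 by rewrite mulnS; lia.
have -> : mu.+1 * n + (r.+1 + mu) = mu.+1 * n.+1 + r by rewrite (mulnS mu.+1); lia.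
have -> : mu * n.+1 + r.+2 = (mu * n.+1 + r.+1).+1 by lia.
have -> : mu.+1 * n.+1 + r.+1 = (mu.+1 * n.+1 + r).+1 by lia.
move: IHr; rewrite [n.+1`!]factS [(mu * n.+1 + r.+1).+1`!]factS [(mu.+1 * n.+1 + r).+1`!]factS.
move: (raney n.+1 r.+1) (raney n (r.+1 + mu).+1) n`! => a b c.
move: (mu * n.+1 + r.+1)`! (mu.+1 * n.+1 + r)`! => d e Ha Hb.
have -> : (a + b) * (n.+1 * c * ((mu * n.+1 + r.+1).+1 * d)) =
    (mu * n.+1 + r.+1).+1 * (a * (n.+1 * c * d))
  + n.+1 * (b * (c * ((mu * n.+1 + r.+1).+1 * d))) by nia.
rewrite Ha Hb; nia.
Qed.

Lemma raney_convolution n r :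
  raney n r.+1 = \sum_(i < n.+1) raney i 1 * raney (n - i) r.
Proof.
elim: n r => [|n IHn] r; first by rewrite big_ord1.
elim: r => [|r IHr].
  rewrite big_ord_recr /= subnn raney0 muln1 big1 ?add0n // => i _.
  by rewrite subSn ?raneyS0 ?muln0 // -ltnS.
rewrite raneySS IHr big_ord_recr /= subnn [in RHS]big_ord_recr /= subnn raney0.
have -> : \sum_(i < n.+1) raney i 1 * raney (n.+1 - i) r.+1 =
    \sum_(i < n.+1) raney i 1 * raney (n.+1 - i) r
  + \sum_(i < n.+1) raney i 1 * raney (n - i) (r.+1 + mu).
  rewrite -big_split; apply: eq_bigr => i _.
  by rewrite subSn ?raneySS ?mulnDr // -ltnS.
by rewrite -IHn -addSn addnAC.
Qed.

End RaneyNumbers.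

Section BallotWords.
Variable mu : nat.

(* A word over [true] (up step) and [false] (down step) is read left to right
   with a credit [s] and [n] up steps still to come: each up step adds [mu] to
   the credit and each down step spends one unit. *)
Fixpoint ballot (s n : nat) (w : seq bool) : bool :=
  match w with
  | [::] => (s == 0) && (n == 0)
  | b :: w' => if b then (0 < n) && ballot (s + mu) n.-1 w'
               else (0 < s) && ballot s.-1 n w'
  end.

Fixpoint ballot_words (n : nat) : nat -> seq (seq bool) :=
  match n with
  | 0 => fun s => [:: nseq s false]
  | n'.+1 => fix ballot_words_n s :=
      map (cons true) (ballot_words n' (s + mu)) ++
      (if s is s'.+1 then map (cons false) (ballot_words_n s') else [::])
  end.

Lemma ballot_words_S0 n :
  ballot_words n.+1 0 = map (cons true) (ballot_words n mu).
Proof. by rewrite /= cats0. Qed.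

Lemma ballot_words_SS n s : ballot_words n.+1 s.+1 =
  map (cons true) (ballot_words n (s.+1 + mu)) ++ map (cons false) (ballot_words n.+1 s).
Proof. by []. Qed.

Lemma size_ballot_words n s : size (ballot_words n s) = raney mu n s.+1.
Proof.
elim: n s => [|n IHn] s //.
elim: s => [|s IHs]; first by rewrite ballot_words_S0 size_map IHn.
by rewrite ballot_words_SS size_cat !size_map IHn IHs [in RHS]raneySS addnC addSnnS addnS.
Qed.

Lemma cons_in_map_cons c (L : seq (seq bool)) b w :
  (b :: w \in map (cons c) L) = (b == c) && (w \in L).
Proof.
elim: L => [|v L IHL] /=; first by rewrite andbF.
by rewrite !inE IHL eqseq_cons; case: (b == c).
Qed.

Lemma nil_in_map_cons c (L : seq (seq bool)) : ([::] \in map (cons c) L) = false.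
Proof. by elim: L. Qed.

Lemma ballot0 s w : ballot s 0 w = (w == nseq s false).
Proof. by elim: w s => [|[] w IHw] [|s] //=; rewrite IHw. Qed.

Lemma mem_ballot_words n s w : (w \in ballot_words n s) = ballot s n w.
Proof.
elim: n s w => [|n IHn] s w; first by rewrite inE ballot0.
elim: s w => [|s IHs] [|b w].
- by rewrite ballot_words_S0 nil_in_map_cons.
- by rewrite ballot_words_S0 cons_in_map_cons IHn; case: b.
- by rewrite ballot_words_SS mem_cat !nil_in_map_cons.
- by rewrite ballot_words_SS mem_cat !cons_in_map_cons IHn IHs; case: b; rewrite /= ?orbF.
Qed.

Lemma uniq_ballot_words n s : uniq (ballot_words n s).
Proof.
have cons_inj c : injective (@cons bool c) by move=> ? ? [].
elim: n s => [|n IHn] s //.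
elim: s => [|s IHs]; first by rewrite ballot_words_S0 map_inj_uniq.
rewrite ballot_words_SS cat_uniq !map_inj_uniq // IHn IHs andbT /=.
by apply/hasPn => _ /mapP [w _ ->]; rewrite cons_in_map_cons.
Qed.

Lemma ballotP s n w : ballot s n w <->
  [/\ count id w = n, count negb w = mu * n + s &
      forall m, count negb (take m w) <= mu * count id (take m w) + s].
Proof.
elim: w s n => [|b w IHw] s n /=.
  split=> [/andP [/eqP -> /eqP ->]|[<-]]; last by rewrite muln0 add0n => <-.
  by split; rewrite ?muln0 //; case.
case: b => /=; split.
- case/andP=> n_gt0 /IHw [cnt_up cnt_down prefix]; split.
  + by rewrite cnt_up add1n prednK.
  + by rewrite cnt_down -{2}(prednK n_gt0) mulnS; lia.
  + by case=> [|m] /=; [lia | have := prefix m; rewrite add1n mulnS; lia].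
- case=> cnt_up cnt_down prefix; apply/andP; split; first lia.
  apply/IHw; split=> [||m]; first lia.
  + by move: cnt_down; rewrite -cnt_up add1n mulnS; lia.
  + by have := prefix m.+1; rewrite /= add1n mulnS; lia.
- case/andP=> s_gt0 /IHw [cnt_up cnt_down prefix]; split=> //.
  + by rewrite cnt_down; lia.
  + by case=> [|m] /=; [lia | have := prefix m; lia].
- case=> cnt_up cnt_down prefix.
  have s_gt0 : 0 < s by have := prefix 1; rewrite /= take0 /=; lia.
  rewrite s_gt0; apply/IHw; split=> [||m] //; first lia.
  by have := prefix m.+1; rewrite /=; lia.
Qed.

End BallotWords.

Section PrefixCounts.
Variables (T : Type) (x0 : T) (a : pred T).

Lemma count_take_le w m : count a (take m w) <= count a w.
Proof. by rewrite -{2}(cat_take_drop m w) count_cat leq_addr. Qed.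

Lemma count_take_mono w m1 m2 : m1 <= m2 -> count a (take m1 w) <= count a (take m2 w).
Proof. by move=> le_m12; rewrite -(take_takel w le_m12) count_take_le. Qed.

Lemma count_takeS w x : x < size w ->
  count a (take x.+1 w) = count a (take x w) + a (nth x0 w x).
Proof. by move=> lt_x_w; rewrite (take_nth x0 lt_x_w) -cats1 count_cat /= addn0. Qed.

Lemma count_take_card n w m : size w = n -> m <= n ->
  count a (take m w) = #|[set y : 'I_n | (y < m) && a (nth x0 w y)]|.
Proof.
move=> <- le_m_w; rewrite -(map_nth_iota0 x0 le_m_w) count_map -sum1_count -sum1dep_card.
rewrite (eq_bigl (fun y : 'I_(size w) => a (nth x0 w y) && (y < m))); last by move=> y; rewrite andbC.
rewrite -(big_ord_widen_cond _ (fun j => a (nth x0 w j)) (fun _ => 1) le_m_w).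
have -> : iota 0 m = index_iota 0 m by rewrite /index_iota subn0.
by rewrite big_mkord.
Qed.

Lemma card_count_take_range n w lo hi : size w = n ->
  #|[set x : 'I_n | a (nth x0 w x) && (lo <= count a (take x w) < hi)]|
    = minn hi (count a w) - lo.
Proof.
move=> <-; rewrite -sum1dep_card.
elim/last_ind: w => [|w b IHw]; first by rewrite big_ord0 minn0.
rewrite size_rcons big_mkcond big_ord_recr /= -big_mkcond /=.
rewrite (eq_bigl (fun j : 'I_(size w) => a (nth x0 w j) && (lo <= count a (take j w) < hi))); last first.
  by move=> j; rewrite nth_rcons ltn_ord -cats1 takel_cat // ltnW.
rewrite IHw nth_rcons ltnn eqxx -cats1 take_size_cat // count_cat /= addn0.
case: (a b) => /=; last by rewrite !addn0.
case: (leqP lo (count a w)); case: (ltnP (count a w) hi) => /=; lia.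
Qed.

End PrefixCounts.

Lemma ord2_eq (a b : 'I_2) : (a == b) = ((val a == 0) == (val b == 0)).
Proof. by case: a => [[|[|?]] ?] //; case: b => [[|[|?]] ?]. Qed.

Lemma ord2_neq0 (a : 'I_2) : val a != 0 -> a = ord_max.
Proof. by case: a => [[|[|?]] ?] // _; apply: val_inj. Qed.

Lemma card_ord_lt n c : c <= n -> #|[set b : 'I_n | b < c]| = c.
Proof.
move=> le_cn; rewrite -sum1dep_card -(big_ord_widen_cond n xpredT (fun _ => 1) le_cn).
by rewrite sum1_card card_ord.
Qed.

Lemma eqn_div_range m d q : 0 < d -> (m %/ d == q) = (q * d <= m < q.+1 * d).
Proof. by move=> d_gt0; rewrite eqn_leq -ltnS ltn_divLR // leq_divRL // andbC. Qed.

Section SVTWords.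
Variables (k i : nat).
Hypothesis k_gt0 : 0 < k.
Local Notation N := (i * k).
Local Notation mu := k.-1.

Definition row_density (rho : 'I_2) := if val rho == 0 then 1 else mu.

Lemma densityE (c : cell i) : density k c = row_density c.1.
Proof. by rewrite /density /row_density subn1. Qed.

Section Tableau.
Variable f : {ffun 'I_N -> cell i}.
Hypothesis f_svt : is_svt f.

Lemma card_svt_fiber c : #|[set x | f x == c]| = density k c.
Proof. by case/andP: f_svt => /forallP /(_ c) /eqP. Qed.

Lemma svt_next_cell x y : next_cell (f x) (f y) -> x < y.
Proof. by case/andP: f_svt => _ /forallP /(_ x) /forallP /(_ y) /implyP. Qed.

Lemma card_svt_preim (A : pred (cell i)) :
  #|[set x | A (f x)]| = \sum_(c | A c) density k c.
Proof.
rewrite -sum1dep_card (partition_big f A) //.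
apply: eq_bigr => c Ac; rewrite -card_svt_fiber -sum1dep_card.
by apply: eq_bigl => x; case: eqP => [->|]; rewrite ?Ac ?andbF.
Qed.

Lemma card_svt_row (rho : 'I_2) (C : {set 'I_i}) :
  #|[set x | ((f x).1 == rho) && ((f x).2 \in C)]| = row_density rho * #|C|.
Proof.
rewrite (card_svt_preim (fun c => (c.1 == rho) && (c.2 \in C))).
rewrite (eq_bigr (fun _ => row_density rho)); last by move=> c /andP [/eqP <- _]; rewrite densityE.
rewrite sum_nat_cond_const mulnC; have := cardsX [set rho] C; rewrite cards1 mul1n => <-.
by congr (_ * _); apply: eq_card => -[a b]; rewrite !inE.
Qed.

Lemma svt_fiber_nonempty (c : cell i) : 0 < row_density c.1 -> exists z, f z = c.
Proof.
by rewrite -densityE -card_svt_fiber card_gt0 => /set0Pn [z]; rewrite inE => /eqP <-; exists z.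
Qed.

Lemma row_density_gt0 x : 0 < row_density (f x).1.
Proof. by rewrite -densityE -card_svt_fiber card_gt0; apply/set0Pn; exists x; rewrite inE. Qed.

Lemma svt_row_lt x y : (f x).1 = (f y).1 -> (f x).2 < (f y).2 -> x < y.
Proof.
move=> same_row /subnKC; move: (_ - _) => d.
elim: d x same_row => [|d IHd] x same_row col_y.
  by apply: svt_next_cell; rewrite /next_cell same_row eqxx /= -col_y addn0 eqxx.
have col_lt : (f x).2.+1 < i by have := ltn_ord (f y).2; lia.
have [z fz] := svt_fiber_nonempty (c := ((f x).1, Ordinal col_lt)) (row_density_gt0 x).
apply: (@ltn_trans z); first by apply: svt_next_cell; rewrite fz /next_cell /= !eqxx.
by apply: IHd; rewrite fz //= -col_y addnS.
Qed.

Lemma svt_col_lt x y : val (f x).1 = 0 -> val (f y).1 = 1 -> (f x).2 <= (f y).2 -> x < y.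
Proof.
move=> top_x bot_y; rewrite leq_eqVlt => /orP [/eqP same_col|lt_col].
  apply: svt_next_cell; rewrite /next_cell top_x bot_y /= orbC andbT.
  by rewrite (val_inj same_col) !eqxx.
have [z fz] := svt_fiber_nonempty (c := ((f y).1, (f x).2)) (row_density_gt0 y).
apply: (@ltn_trans z).
  by apply: svt_next_cell; rewrite /next_cell fz /= eqxx top_x bot_y /= orbT.
by apply: svt_row_lt; rewrite fz.
Qed.

Lemma card_svt_row_before (x : 'I_N) :
  let before := #|[set y : 'I_N | (y < x) && ((f y).1 == (f x).1)]| in
  row_density (f x).1 * (f x).2 <= before < row_density (f x).1 * (f x).2.+1.
Proof.
have card_cols c : c <= i ->
    #|[set y | ((f y).1 == (f x).1) && ((f y).2 < c)]| = row_density (f x).1 * c.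
  by move=> le_ci; rewrite -[in RHS](card_ord_lt le_ci) -card_svt_row; apply: eq_card => y; rewrite !inE.
rewrite /= -(card_cols _ (ltnW (ltn_ord (f x).2))) -(card_cols _ (ltn_ord (f x).2)).
apply/andP; split.
  apply: subset_leq_card; apply/subsetP => y; rewrite !inE => /andP [/eqP same_row lt_col].
  by rewrite same_row eqxx andbT svt_row_lt.
set A := [set y | _ && (_ < (f x).2.+1)].
rewrite (cardsD1 x A) inE eqxx ltnSn add1n ltnS.
apply: subset_leq_card; apply/subsetP => y; rewrite !inE => /andP [lt_yx /eqP same_row].
rewrite same_row eqxx neq_ltn lt_yx /= ltnS leqNgt; apply/negP => /(svt_row_lt (esym same_row)).
by rewrite ltnNge ltnW.
Qed.

(* Every second-row entry before position m lies below a first-row entry that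
   comes even earlier, and each column holds mu second-row entries. *)
Lemma svt_prefix_ballot m :
  #|[set y : 'I_N | (y < m) && (val (f y).1 != 0)]|
    <= mu * #|[set y : 'I_N | (y < m) && (val (f y).1 == 0)]|.
Proof.
set U := [set y | _ && (val _ == 0)].
apply: (@leq_trans #|[set x | ((f x).1 == ord_max) && ((f x).2 \in [set (f y).2 | y in U])]|).
  apply: subset_leq_card; apply/subsetP => y; rewrite !inE => /andP [lt_ym bot_y].
  rewrite (ord2_neq0 bot_y) eqxx /=.
  have [z fz] := svt_fiber_nonempty (c := (ord0, (f y).2)) isT.
  apply/imsetP; exists z; rewrite ?fz // inE fz eqxx andbT.
  by apply: (@ltn_trans y _ _ _ lt_ym); apply: svt_col_lt; rewrite ?fz //= (ord2_neq0 bot_y).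
by rewrite card_svt_row leq_mul2l leq_imset_card orbT.
Qed.

End Tableau.

Definition svt_word (f : {ffun 'I_N -> cell i}) : seq bool :=
  [seq val (f x).1 == 0 | x <- enum 'I_N].

Lemma size_svt_word f : size (svt_word f) = N.
Proof. by rewrite size_map size_enum_ord. Qed.

Lemma nth_svt_word f (y : 'I_N) : nth false (svt_word f) y = (val (f y).1 == 0).
Proof. by rewrite (nth_map y) ?size_enum_ord // nth_ord_enum. Qed.

Lemma count_svt_word_take f (a : pred bool) m : m <= N ->
  count a (take m (svt_word f)) = #|[set y : 'I_N | (y < m) && a (val (f y).1 == 0)]|.
Proof.
move=> le_mN; rewrite (count_take_card false a (size_svt_word f) le_mN).
by apply: eq_card => y; rewrite !inE nth_svt_word.
Qed.

Lemma svt_word_ballot f : is_svt f -> ballot mu 0 i (svt_word f).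
Proof.
move=> f_svt.
have count_row (a : pred bool) rho :
    (forall y, a (val (f y).1 == 0) = ((f y).1 == rho)) ->
    count a (svt_word f) = row_density rho * i.
  move=> a_row; rewrite -(take_size (svt_word f)) size_svt_word count_svt_word_take //.
  rewrite -[X in row_density _ * X]card_ord -cardsT -(card_svt_row f_svt).
  by apply: eq_card => y; rewrite !inE ltn_ord a_row andbT.
have prefix m : m <= N ->
    count negb (take m (svt_word f)) <= mu * count id (take m (svt_word f)) + 0.
  by move=> le_mN; rewrite addn0 !count_svt_word_take //; apply: svt_prefix_ballot.
apply/ballotP; split=> [|| m].
- by rewrite (count_row _ ord0) ?mul1n // => y; rewrite ord2_eq.
- by rewrite (count_row _ ord_max) ?addn0 // => y; rewrite ord2_eq eqbF_neg.
- have [le_mN | lt_Nm] := leqP m N; first exact: prefix.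
  by have := prefix N (leqnn N); rewrite !take_oversize ?size_svt_word // ltnW.
Qed.

Lemma i_gt0 (x : 'I_N) : 0 < i.
Proof. by have := leq_ltn_trans (leq0n x) (ltn_ord x); rewrite muln_gt0 => /andP []. Qed.

Definition row_of_bool (b : bool) : 'I_2 := if b then ord0 else ord_max.

Definition decode_column (w : seq bool) (x : nat) : nat :=
  if nth false w x then count id (take x w) else count negb (take x w) %/ mu.

(* The default column of [insubd] is never used on ballot words (decode_column_lt). *)
Definition svt_decode (w : seq bool) : {ffun 'I_N -> cell i} :=
  [ffun x : 'I_N => (row_of_bool (nth false w x), insubd (Ordinal (i_gt0 x)) (decode_column w x))].

Lemma decode_column_svt_word f (x : 'I_N) :
  is_svt f -> decode_column (svt_word f) x = (f x).2.
Proof.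
move=> f_svt; have /andP [lo hi] := card_svt_row_before f_svt x.
have mu_gt0 := row_density_gt0 f_svt x.
have count_same_row (a : pred bool) :
    (forall y, a (val (f y).1 == 0) = ((f y).1 == (f x).1)) ->
    count a (take x (svt_word f)) = #|[set y : 'I_N | (y < x) && ((f y).1 == (f x).1)]|.
  by move=> a_row; rewrite count_svt_word_take 1?ltnW //; apply: eq_card => y; rewrite !inE a_row.
rewrite /decode_column nth_svt_word; move: lo hi mu_gt0; rewrite /row_density.
case: ifP => top_x lo hi mu_gt0; apply/eqP; rewrite eqn_leq -ltnS.
  rewrite (count_same_row id) => [|y]; last by rewrite ord2_eq top_x eqb_id.
  by rewrite !mul1n in lo hi; rewrite lo hi.
rewrite (count_same_row negb) => [|y]; last by rewrite ord2_eq top_x eqbF_neg.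
by rewrite ltn_divLR // leq_divRL // !(mulnC _ mu) lo hi.
Qed.

Lemma svt_decode_word f : is_svt f -> svt_decode (svt_word f) = f.
Proof.
move=> f_svt; apply/ffunP => x; rewrite ffunE [RHS]surjective_pairing nth_svt_word.
congr pair; last by apply: val_inj; rewrite val_insubd decode_column_svt_word // ltn_ord.
by apply: val_inj; case: (f x).1 => [[|[|?]] ?].
Qed.

Section DecodeBallot.
Variable w : seq bool.
Hypothesis w_ballot : ballot mu 0 i w.

Lemma ballot_count_up : count id w = i.
Proof. by case/ballotP: w_ballot. Qed.

Lemma ballot_count_down : count negb w = mu * i.
Proof. by case/ballotP: w_ballot => _ -> _; rewrite addn0. Qed.

Lemma ballot_prefix m : count negb (take m w) <= mu * count id (take m w).
Proof. by case/ballotP: w_ballot => _ _ /(_ m); rewrite addn0. Qed.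

Lemma size_ballot : size w = N.
Proof.
rewrite -(count_predC id w) ballot_count_up (eq_count (a2 := negb)) //.
by rewrite ballot_count_down -mulSn prednK // mulnC.
Qed.

Lemma ballot_down_mu_gt0 x : x < size w -> ~~ nth false w x -> 0 < mu.
Proof.
move=> lt_xw down_x; rewrite lt0n; apply: contraTneq isT => mu0.
have : 0 < count negb w by rewrite -has_count; apply/hasP; exists (nth false w x); rewrite ?mem_nth.
by rewrite ballot_count_down mu0.
Qed.

Lemma decode_column_lt (x : 'I_N) : decode_column w x < i.
Proof.
have lt_xw : x < size w by rewrite size_ballot.
rewrite /decode_column; case: ifP => [up_x | /negbT down_x].
  have := count_take_le id w x.+1.
  by rewrite (count_takeS false id lt_xw) up_x addn1 ballot_count_up.
have := count_take_le negb w x.+1.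
rewrite (count_takeS false negb lt_xw) down_x addn1 ballot_count_down => lt_cnt.
by rewrite ltn_divLR ?(ballot_down_mu_gt0 lt_xw) // [i * mu]mulnC.
Qed.

Lemma svt_decode_row (x : 'I_N) : (svt_decode w x).1 = row_of_bool (nth false w x).
Proof. by rewrite ffunE. Qed.

Lemma svt_decode_col (x : 'I_N) : val (svt_decode w x).2 = decode_column w x.
Proof. by rewrite ffunE /= val_insubd decode_column_lt. Qed.

Lemma svt_decode_density c : #|[set x | svt_decode w x == c]| = density k c.
Proof.
case: c => rho j; rewrite densityE /row_density /=.
have -> : [set x | svt_decode w x == (rho, j)] =
    [set x : 'I_N | (row_of_bool (nth false w x) == rho) && (decode_column w x == j)].
  apply/setP => x; rewrite !inE [svt_decode w x]surjective_pairing xpair_eqE svt_decode_row.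
  by congr (_ && _); rewrite -val_eqE svt_decode_col.
case: ifP => [top_rho | /negbT bot_rho].
  rewrite (eq_finset (fun x : 'I_N => nth false w x && (j <= count id (take x w) < j.+1))).
    by rewrite card_count_take_range ?size_ballot // ballot_count_up (minn_idPl (ltn_ord j)) subSnn.
  move=> x; rewrite /decode_column (ord2_eq _ rho) top_rho.
  by case: (nth false w x) => //=; rewrite eqn_leq ltnS andbC.
rewrite (eq_finset (fun x : 'I_N => ~~ nth false w x && (j * mu <= count negb (take x w) < j.+1 * mu))).
  rewrite card_count_take_range ?size_ballot // ballot_count_down.
  by rewrite (minn_idPl _) ?mulSn ?addnK // -mulSn mulnC leq_mul2l ltn_ord orbT.
move=> x; rewrite /decode_column (ord2_eq _ rho) (negbTE bot_rho).
have lt_xw : x < size w by rewrite size_ballot.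
case: (boolP (nth false w x)) => //= down_x.
by rewrite eqn_div_range ?(ballot_down_mu_gt0 lt_xw).
Qed.

Lemma svt_decode_next_cell x y : next_cell (svt_decode w x) (svt_decode w y) -> x < y.
Proof.
have lt_w (z : 'I_N) : z < size w by rewrite size_ballot.
have count_lt (a : pred bool) : count a (take x w) < count a (take y w) -> x < y.
  by apply: contraTT; rewrite -!leqNgt; apply: count_take_mono.
have row_eq b1 b2 : (row_of_bool b1 == row_of_bool b2) = (b1 == b2) by case: b1; case: b2.
rewrite /next_cell !svt_decode_row row_eq; case/orP.
  case/andP=> /eqP same_letter; rewrite !svt_decode_col /decode_column -same_letter.
  case: ifP => _ /eqP next_col; first by apply: (count_lt id); rewrite next_col.
  apply: (count_lt negb); rewrite ltnNge; apply/negP => /(leq_div2r mu).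
  by rewrite next_col ltnn.
case/andP=> /andP [/eqP same_col up_x] down_y.
have {}up_x : nth false w x by case: (nth false w x) up_x.
have {}down_y : ~~ nth false w y by case: (nth false w y) down_y.
have := ballot_prefix y.+1; rewrite (count_takeS false negb (lt_w y)) (count_takeS false id (lt_w y)).
rewrite down_y (negbTE down_y) addn0 addn1 => prefix_y.
have mu_gt0 := ballot_down_mu_gt0 (lt_w y) down_y.
apply: (count_lt id); rewrite -(ltn_pmul2l mu_gt0); apply: leq_ltn_trans prefix_y.
move: same_col => /(congr1 val); rewrite !svt_decode_col /decode_column up_x (negbTE down_y) => ->.
by rewrite mulnC leq_divM.
Qed.

Lemma svt_decode_svt : is_svt (svt_decode w).
Proof.
apply/andP; split; first by apply/forallP => c; rewrite svt_decode_density.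
by apply/forallP => x; apply/forallP => y; apply/implyP; apply: svt_decode_next_cell.
Qed.

Lemma svt_word_decode : svt_word (svt_decode w) = w.
Proof.
rewrite /svt_word (eq_map (g := fun x : 'I_N => nth false w x)); last first.
  by move=> x; rewrite svt_decode_row; case: (nth false w x).
by rewrite (map_comp (nth false w) val) val_enum_ord map_nth_iota0 -size_ballot ?take_size.
Qed.

End DecodeBallot.

Lemma card_SVT : #|SVT k i| = raney mu i 1.
Proof.
pose word (T : SVT k i) := svt_word (val T).
have word_inj : injective word.
  move=> T1 T2 same_word; apply: val_inj.
  by rewrite -(svt_decode_word (valP T1)) -(svt_decode_word (valP T2)) [svt_word _]same_word.
rewrite cardE -(size_map word) -(size_ballot_words mu i 0).
apply/perm_size/uniq_perm => [||w].
- by rewrite map_inj_uniq // enum_uniq.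
- exact: uniq_ballot_words.
rewrite mem_ballot_words; apply/mapP/idP => [[T _ ->]|w_ballot].
  exact: svt_word_ballot (valP T).
exists (exist _ (svt_decode w) (svt_decode_svt w_ballot)); first by rewrite mem_enum.
by rewrite /word svt_word_decode.
Qed.

End SVTWords.

Local Open Scope ring_scope.

Lemma card_ffun_weight_eq (T : finType) (w : T -> nat) r m :
  #|[set t : {ffun 'I_r -> T} | (\sum_(j < r) w (t j) == m)%N]|
    = ((\sum_(x : T) 'X^(w x) : {poly nat}) ^+ r)`_m.
Proof.
have -> : (\sum_(x : T) 'X^(w x)) ^+ r = \prod_(j < r) \sum_(x : T) 'X^(w x) :> {poly nat}.
  by rewrite prodr_const card_ord.
rewrite bigA_distr_bigA coef_sum -sum1dep_card big_mkcond /=.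
by apply: eq_bigr => t _; rewrite prodrXr coefXn natn eq_sym; case: eqP.
Qed.

Lemma sum_tag_weight_gf n (J : 'I_n -> finType) (a : nat -> nat) :
    (forall i : 'I_n, #|J i| = a i) ->
  \sum_(x : {i : 'I_n & J i}) 'X^(val (tag x)) = \poly_(i < n) a i :> {poly nat}.
Proof.
move=> card_J; rewrite poly_def.
rewrite -(sig_big_dep xpredT (fun _ _ => true) (fun i _ => 'X^(val i))) /=.
by apply: eq_bigr => i _; rewrite sumr_const -scaler_nat natn card_J.
Qed.

Lemma coef_raney_gf_exp mu n r m : (m <= n)%N ->
  ((\poly_(i < n.+1) raney mu i 1 : {poly nat}) ^+ r)`_m = raney mu m r.
Proof.
elim: r m => [|r IHr] m le_mn; first by rewrite expr0 coef1 natn; case: m {le_mn}.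
rewrite exprS coefM raney_convolution; apply: eq_bigr => -[j /= lt_jm] _.
rewrite coef_poly IHr ?(leq_trans (leq_subr _ _) le_mn) //.
by rewrite ltnS (leq_trans _ le_mn) // -ltnS.
Qed.

Lemma raney_closed_form (R : numFieldType) k n r : (0 < k)%N -> (0 < r)%N ->
  r%:R / (k * n + r)%:R * 'C(k * n + r, n)%:R = (raney k.-1 n r)%:R :> R.
Proof.
case: k => // mu _; case: r => // r _ /=.
have -> : (mu.+1 * n + r.+1 = (mu.+1 * n + r).+1)%N by lia.
have binE : ('C((mu.+1 * n + r).+1, n) * (n`! * (mu * n + r.+1)`!) = (mu.+1 * n + r).+1`!)%N.
  have -> : (mu * n + r.+1 = (mu.+1 * n + r).+1 - n)%N by rewrite mulSn; lia.
  by apply: bin_fact; rewrite mulSn; lia.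
have fact_neq0 : (n`! * (mu * n + r.+1)`!)%:R != 0 :> R.
  by rewrite pnatr_eq0 muln_eq0 negb_or -!lt0n !fact_gt0.
apply: (mulIf fact_neq0).
rewrite -natrM raney_factorial -!mulrA -natrM binE factS natrM mulKf; last by rewrite pnatr_eq0.
by rewrite natrM.
Qed.

Theorem proposition2 (k r n : nat) (hk : (1 <= k)%N) (hr : (1 <= r)%N) :
  (r%:R / (k * n + r)%:R * ('C(k * n + r, n))%:R : rat)
    = (#|svt_tuples k r n|)%:R.
Proof.
rewrite raney_closed_form //; congr _%:R.
rewrite /svt_tuples (card_ffun_weight_eq (fun x : {i : 'I_n.+1 & SVT k i} => val (tag x))).
rewrite (sum_tag_weight_gf (a := fun i => raney k.-1 i 1)) ?coef_raney_gf_exp //.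
by move=> i; apply: card_SVT.
Qed.
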